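(* Let $(X,A,\prec)$ be an alignment of the family $\{(X_a,\prec_a)\}_{a\in I}$ and let $\mathfrak{Q}$ be a partition of $X$ into blocks such that (i) every column $P\in\mathcal{C}(X,A)$ is contained in some block $Y\in\mathfrak{Q}$, and (ii) there is a strict partial order $\triangleleft$ on $\mathfrak{Q}$ such that for any two distinct blocks $Y',Y''$, if there are columns $P\subseteq Y'$ and $Q\subseteq Y''$ with $P\prec Q$ then $Y'\triangleleft Y''$. Define $\prec'$ on $\mathcal{C}(X,A)$ by $P\prec' Q$ if and only if either $P,Q\subseteq Y$ for some $Y\in\mathfrak{Q}$ and $P\prec Q$, or $P\subseteq Y'$, $Q\subseteq Y''$ with $Y'\triangleleft Y''$. Then $\prec'$ is a strict partial order extending $\prec$, and $(X,A,\prec')$ is an alignment of the family.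
   Context: Let $I$ be a finite index set (''rows''), and for each $a\in I$ let $(X_a,\prec_a)$ be a finite set with a strict partial order. Elements of $X_a$ are written $(a,i)$, and $X=\dot\bigcup_{a\in I}X_a$. For a simple undirected graph $(X,A)$, $\mathcal{C}(X,A)$ denotes its set of connected components (''columns''). An alignment of the family is a triple $(X,A,\prec)$ where $\prec$ is a strict partial order on $\mathcal{C}(X,A)$ such that: (P1) every $Q\in\mathcal{C}(X,A)$ induces a complete subgraph of $(X,A)$; (P2) if $(a,i)\in Q$ and $(a,j)\in Q$ then $i=j$; (P3) if $(a,i)\in P$, $(a,j)\in Q$ and $(a,i)\prec_a(a,j)$ then $P\prec Q$; (P4) if $P\prec Q$, $(a,i)\in P$ and $(a,j)\in Q$, then $(a,i)\prec_a(a,j)$ or $(a,i)$ and $(a,j)$ are incomparable w.r.t. $\prec_a$. *)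

From mathcomp Require Import all_boot.
Set Implicit Arguments. Unset Strict Implicit. Unset Printing Implicit Defensive.

(* The disjoint union X of the rows X_a: elements are pairs (a, i). *)
Definition elt (I : finType) (Xa : I -> finType) : finType := {a : I & Xa a}.

(* The family of row orders, assembled into one relation on X:
   x <_X y iff x = (a,i), y = (a,j) are in the same row a and (a,i) <_a (a,j). *)
Definition Xlt (I : finType) (Xa : I -> finType) (lta : forall a, rel (Xa a))
  : rel (elt Xa) :=
  fun x y => (tag x == tag y) && lta (tag x) (tagged x) (tagged_as x y).

Definition strict_po (T : Type) (D : {pred T}) (r : rel T) : Prop :=
  (forall x, x \in D -> ~~ r x x) /\
  (forall x y z, x \in D -> y \in D -> z \in D -> r x y -> r y z -> r x z).

Definition simple_graph (T : Type) (A : rel T) : Prop :=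
  (forall x, ~~ A x x) /\ (forall x y, A x y = A y x).

Definition column (T : finType) (A : rel T) (x : T) : {set T} :=
  [set y | connect A x y].
Definition columns (T : finType) (A : rel T) : {set {set T}} :=
  [set column A x | x : T].

Definition alignment (I : finType) (Xa : I -> finType)
  (lta : forall a, rel (Xa a)) (A : rel (elt Xa)) (prec : rel {set elt Xa}) : Prop :=
  strict_po (mem (columns A)) prec /\
  (forall Q, Q \in columns A -> forall x y, x \in Q -> y \in Q -> x != y -> A x y) /\
  (forall Q, Q \in columns A -> forall x y, x \in Q -> y \in Q -> tag x = tag y -> x = y) /\
  (forall P Q, P \in columns A -> Q \in columns A -> forall x y, x \in P -> y \in Q ->
     Xlt lta x y -> prec P Q) /\
  (forall P Q, P \in columns A -> Q \in columns A -> prec P Q -> forall x y,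
     x \in P -> y \in Q -> tag x = tag y ->
     Xlt lta x y || (~~ Xlt lta x y && ~~ Xlt lta y x)).

Definition prec' (T : finType) (Qs : {set {set T}}) (prec tri : rel {set T})
  : rel {set T} :=
  fun P Q =>
    ([exists Y in Qs, (P \subset Y) && (Q \subset Y)] && prec P Q) ||
    [exists Y1 in Qs, exists Y2 in Qs,
        [&& P \subset Y1, Q \subset Y2 & tri Y1 Y2]].

From mathcomp Require Import all_boot.

Set Implicit Arguments.
Unset Strict Implicit.
Unset Printing Implicit Defensive.

(* Each column lies in a unique block, so [prec'] compares two columns by
   [prec] when they share a block and by [tri] on their blocks otherwise; it
   is thus a lexicographic combination of two strict orders.  Condition (ii)
   makes it extend [prec].  Any strict order extending [prec] on the columns
   is again an alignment order: (P1)-(P3) do not involve the new order beyond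
   extension, and (P4) holds because a pair violating it would, by (P3), be
   ordered both ways. *)

Lemma strict_po_asym (T : Type) (D : {pred T}) (r : rel T) x y :
  strict_po D r -> x \in D -> y \in D -> r x y -> ~~ r y x.
Proof.
by case=> irr tr Dx Dy rxy; apply/negP=> ryx; case/negP: (irr x Dx); exact: tr ryx.
Qed.

Lemma alignment_extend (I : finType) (Xa : I -> finType)
    (lta : forall a, rel (Xa a)) (A : rel (elt Xa)) (prec prec2 : rel {set elt Xa}) :
  alignment lta A prec -> strict_po (mem (columns A)) prec2 ->
  (forall P Q, P \in columns A -> Q \in columns A -> prec P Q -> prec2 P Q) ->
  alignment lta A prec2.
Proof.
move=> [_ [P1 [P2 [P3 _]]]] po2 ext.
have P3_ext P Q : P \in columns A -> Q \in columns A -> forall x y, x \in P -> y \in Q ->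
    Xlt lta x y -> prec2 P Q.
  by move=> CP CQ x y xP yQ lt_xy; apply: ext (P3 P Q CP CQ x y xP yQ lt_xy).
do 3!split=> //; split; first exact: P3_ext.
move=> P Q CP CQ lt_PQ x y xP yQ _.
have [//|/= _] := boolP (Xlt lta x y).
apply/negP=> lt_yx; case/negP: (strict_po_asym po2 CP CQ lt_PQ).
exact: P3_ext CQ CP y x yQ xP lt_yx.
Qed.

Section RefinedOrder.

Variables (T : finType) (Cs Qs : {set {set T}}) (prec tri : rel {set T}).
Hypothesis Qs_triv : trivIset Qs.
Hypothesis Cs_inhabited : forall P, P \in Cs -> exists x, x \in P.

Lemma block_unique P Y1 Y2 : P \in Cs -> Y1 \in Qs -> Y2 \in Qs ->
  P \subset Y1 -> P \subset Y2 -> Y1 = Y2.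
Proof.
move=> /Cs_inhabited[x xP] Y1Q Y2Q /subsetP sPY1 /subsetP sPY2.
by rewrite -(def_pblock Qs_triv Y1Q (sPY1 x xP)) (def_pblock Qs_triv Y2Q (sPY2 x xP)).
Qed.

Lemma prec'E P Q YP YQ : P \in Cs -> Q \in Cs -> YP \in Qs -> YQ \in Qs ->
    P \subset YP -> Q \subset YQ ->
  prec' Qs prec tri P Q = ((YP == YQ) && prec P Q) || tri YP YQ.
Proof.
move=> CP CQ YPQ YQQ sP sQ; apply/orP/orP.
  case=> [/andP[/exists_inP[Y YQs /andP[sPY sQY]] lt_PQ] |
          /exists_inP[Y1 Y1Q /exists_inP[Y2 Y2Q /and3P[sP1 sQ2 t12]]]].
    by left; rewrite (block_unique CP YPQ YQs sP sPY) (block_unique CQ YQQ YQs sQ sQY) eqxx.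
  by right; rewrite (block_unique CP YPQ Y1Q sP sP1) (block_unique CQ YQQ Y2Q sQ sQ2).
case=> [/andP[/eqP eYPQ lt_PQ] | tPQ].
  by left; rewrite lt_PQ andbT; apply/exists_inP; exists YP; rewrite // sP eYPQ sQ.
by right; apply/exists_inP; exists YP => //; apply/exists_inP; exists YQ; rewrite ?sP ?sQ.
Qed.

Hypothesis Cs_block : forall P, P \in Cs -> exists2 Y, Y \in Qs & P \subset Y.

Lemma prec'_strict_po :
  strict_po (mem Cs) prec -> strict_po (mem Qs) tri ->
  strict_po (mem Cs) (prec' Qs prec tri).
Proof.
move=> [irr tr] [tirr ttr]; split.
  move=> P CP; have [Y YQ sPY] := Cs_block CP.
  by rewrite (prec'E CP CP YQ YQ sPY sPY) eqxx negb_or irr ?tirr.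
move=> P Q R CP CQ CR; have [YP YPQ sP] := Cs_block CP.
have [YQ YQQ sQ] := Cs_block CQ; have [YR YRQ sR] := Cs_block CR.
rewrite (prec'E CP CQ YPQ YQQ sP sQ) (prec'E CQ CR YQQ YRQ sQ sR).
rewrite (prec'E CP CR YPQ YRQ sP sR).
case/orP=> [/andP[/eqP-> lt_PQ] | tPQ]; case/orP=> [/andP[/eqP<- lt_QR] | tQR].
- by rewrite eqxx (tr P Q R).
- by rewrite tQR orbT.
- by rewrite tPQ orbT.
- by rewrite (ttr YP YQ YR) ?orbT.
Qed.

Lemma prec'_extends P Q :
  (forall Y1 Y2 P Q, Y1 \in Qs -> Y2 \in Qs -> Y1 != Y2 -> P \in Cs -> Q \in Cs ->
     P \subset Y1 -> Q \subset Y2 -> prec P Q -> tri Y1 Y2) ->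
  P \in Cs -> Q \in Cs -> prec P Q -> prec' Qs prec tri P Q.
Proof.
move=> cross CP CQ lt_PQ; have [YP YPQ sP] := Cs_block CP.
have [YQ YQQ sQ] := Cs_block CQ; rewrite (prec'E CP CQ YPQ YQQ sP sQ) lt_PQ.
by have [//|neYPQ] := eqVneq YP YQ; rewrite (cross YP YQ P Q) ?orbT.
Qed.

End RefinedOrder.

Lemma column_inhabited (T : finType) (A : rel T) P :
  P \in columns A -> exists x, x \in P.
Proof. by case/imsetP=> x _ ->; exists x; rewrite inE connect0. Qed.

Theorem lemma6 (I : finType) (Xa : I -> finType) (lta : forall a, rel (Xa a))
  (Hlta : forall a, strict_po predT (lta a))
  (A : rel (elt Xa)) (HA : simple_graph A)
  (prec : rel {set elt Xa}) (Hal : alignment lta A prec)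
  (Qs : {set {set elt Xa}}) (HQ : partition Qs [set: elt Xa])
  (Hi : forall P, P \in columns A -> exists2 Y, Y \in Qs & P \subset Y)
  (tri : rel {set elt Xa}) (Htri : strict_po (mem Qs) tri)
  (Hii : forall Y1 Y2 P Q, Y1 \in Qs -> Y2 \in Qs -> Y1 != Y2 ->
           P \in columns A -> Q \in columns A ->
           P \subset Y1 -> Q \subset Y2 -> prec P Q -> tri Y1 Y2) :
  strict_po (mem (columns A)) (prec' Qs prec tri) /\
  (forall P Q, P \in columns A -> Q \in columns A ->
     prec P Q -> prec' Qs prec tri P Q) /\
  alignment lta A (prec' Qs prec tri).
Proof.
have Qs_triv : trivIset Qs by case/and3P: HQ.
have po' := prec'_strict_po Qs_triv (@column_inhabited _ A) Hi Hal.1 Htri.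
have ext := prec'_extends Qs_triv (@column_inhabited _ A) Hi Hii.
by split; [|split; [|exact: alignment_extend Hal po' ext]].
Qed.
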